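(* Let $S,T$ be stochastic matrices on a finite set $\Omega$, both reversible w.r.t. a probability measure $\mu$ with full support and both positive semidefinite, and assume $S^2=S$. Then for every $a\in[0,1]$, $$\lambda(STS)\ge\lambda(aS+(1-a)T).$$
   Context: $\langle f,g\rangle_\mu=\sum_{x}f(x)g(x)\mu(x)$, $\mu(f)=\sum_xf(x)\mu(x)$. A matrix $P$ is positive semidefinite if it is self-adjoint in $L_2(\mu)$ and $\langle f,Pf\rangle_\mu\ge0$ for all $f$. For a positive semidefinite stochastic $P$ reversible w.r.t. $\mu$, $\lambda(P)=1-\sup\{\langle f,Pf\rangle_\mu:\mu(f)=0,\ \langle f,f\rangle_\mu\le1\}$ (equal to $1$ minus the second largest eigenvalue when $P$ is irreducible, which coincides with the absolute spectral gap). *)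

From mathcomp Require Import all_boot.
From Stdlib Require Import Reals ClassicalEpsilon.
Set Implicit Arguments. Unset Strict Implicit.
Open Scope R_scope.

Definition rsum {T : finType} (F : T -> R) : R := \big[Rplus/0]_(x : T) F x.

Definition mxmul {T : finType} (P Q : T -> T -> R) : T -> T -> R :=
  fun x y => rsum (fun z => P x z * Q z y).
Definition mxadd {T : finType} (P Q : T -> T -> R) : T -> T -> R :=
  fun x y => P x y + Q x y.
Definition mxscale {T : finType} (a : R) (P : T -> T -> R) : T -> T -> R :=
  fun x y => a * P x y.
Definition mxapply {T : finType} (P : T -> T -> R) (f : T -> R) : T -> R :=
  fun x => rsum (fun y => P x y * f y).

Definition inner {T : finType} (mu f g : T -> R) : R := rsum (fun x => f x * g x * mu x).
Definition mean {T : finType} (mu f : T -> R) : R := rsum (fun x => f x * mu x).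

Definition prob_full_support {T : finType} (mu : T -> R) : Prop :=
  (forall x, 0 < mu x) /\ rsum mu = 1.
Definition stochastic {T : finType} (P : T -> T -> R) : Prop :=
  (forall x y, 0 <= P x y) /\ (forall x, rsum (P x) = 1).
Definition reversible {T : finType} (mu : T -> R) (P : T -> T -> R) : Prop :=
  forall x y, mu x * P x y = mu y * P y x.
Definition self_adjoint {T : finType} (mu : T -> R) (P : T -> T -> R) : Prop :=
  forall f g, inner mu f (mxapply P g) = inner mu (mxapply P f) g.
Definition psd {T : finType} (mu : T -> R) (P : T -> T -> R) : Prop :=
  self_adjoint mu P /\ (forall f, 0 <= inner mu f (mxapply P f)).

(* Supremum of a set of reals (0 if not nonempty & bounded above). *)
Definition Rsup (E : R -> Prop) : R :=
  match excluded_middle_informative (bound E /\ exists x, E x) with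
  | left H => proj1_sig (completeness E (proj1 H) (proj2 H))
  | right _ => 0
  end.

Definition gap {T : finType} (mu : T -> R) (P : T -> T -> R) : R :=
  1 - Rsup (fun r => exists f : T -> R,
              mean mu f = 0 /\ inner mu f f <= 1 /\ r = inner mu f (mxapply P f)).

(* For f with mu(f) = 0 and <f,f> <= 1 put g = S f. Since S is a self-adjoint
   idempotent, g is again admissible (it has mean zero and <g,g> <= <f,f>),
   <f, STS f> = <g, T g>, and S g = g. As <g, T g> <= <g, g> for any reversible
   stochastic T, we get <g, (aS + (1-a)T) g> = a <g,g> + (1-a) <g,Tg> >= <g,Tg>:
   every value in the supremum defining lambda(STS) is dominated by one in the
   supremum defining lambda(aS + (1-a)T). *)

From HB Require Import structures.
From mathcomp Require Import all_boot.
From Stdlib Require Import Reals Lra FunctionalExtensionality ClassicalEpsilon.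
Open Scope R_scope.
Set Implicit Arguments. Unset Strict Implicit.

HB.instance Definition _ := Monoid.isComLaw.Build R 0 Rplus
  (fun a b c => esym (Rplus_assoc a b c)) Rplus_comm Rplus_0_l.

Section FiniteSums.
Variable T : finType.

Lemma eq_rsum (F G : T -> R) : (forall x, F x = G x) -> rsum F = rsum G.
Proof. by move=> FG; apply: eq_bigr => x _. Qed.

Lemma rsumD (F G : T -> R) : rsum (fun x => F x + G x) = rsum F + rsum G.
Proof. exact: big_split. Qed.

Lemma rsumMl c (F : T -> R) : rsum (fun x => c * F x) = c * rsum F.
Proof. rewrite /rsum; elim/big_rec2: _ => [|x s1 s2 _ ->]; ring. Qed.

Lemma rsumMr c (F : T -> R) : rsum (fun x => F x * c) = rsum F * c.
Proof. by rewrite Rmult_comm -rsumMl; apply: eq_rsum => x; ring. Qed.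

Lemma rsum0 : rsum (fun _ : T => 0) = 0.
Proof. exact: big1. Qed.

Lemma ler_rsum (F G : T -> R) : (forall x, F x <= G x) -> rsum F <= rsum G.
Proof.
move=> FG; rewrite /rsum; elim/big_rec2: _ => [|x s1 s2 _ le12]; first lra.
exact: Rplus_le_compat.
Qed.

Lemma rsum_exchange (F : T -> T -> R) :
  rsum (fun x => rsum (F x)) = rsum (fun y => rsum (fun x => F x y)).
Proof. exact: exchange_big. Qed.

End FiniteSums.

Section InnerProduct.
Variables (Om : finType) (mu : Om -> R).
Hypothesis mu_gt0 : forall x, 0 < mu x.

Lemma mxapply_mul (P Q : Om -> Om -> R) f :
  mxapply (mxmul P Q) f = mxapply P (mxapply Q f).
Proof.
apply: functional_extensionality => x; rewrite /mxapply /mxmul.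
under eq_rsum => y do rewrite -rsumMr.
rewrite rsum_exchange; apply: eq_rsum => z.
by rewrite -rsumMl; apply: eq_rsum => y; ring.
Qed.

Lemma mxapply_comb a b (P Q : Om -> Om -> R) f :
  mxapply (mxadd (mxscale a P) (mxscale b Q)) f =
  (fun x => a * mxapply P f x + b * mxapply Q f x).
Proof.
apply: functional_extensionality => x; rewrite /mxapply -!rsumMl -rsumD.
by apply: eq_rsum => y; rewrite /mxadd /mxscale; ring.
Qed.

Lemma inner_linr f a b g h :
  inner mu f (fun x => a * g x + b * h x) = a * inner mu f g + b * inner mu f h.
Proof. by rewrite /inner -!rsumMl -rsumD; apply: eq_rsum => x; ring. Qed.

Lemma inner_ge0 f : 0 <= inner mu f f.
Proof.
rewrite -(rsum0 Om); apply: ler_rsum => x.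
by apply: Rmult_le_pos; [apply: Rle_0_sqr | apply: Rlt_le].
Qed.

Lemma inner_subrr f g : inner mu (fun x => f x - g x) (fun x => f x - g x)
  = inner mu f f - 2 * inner mu f g + inner mu g g.
Proof.
have oppE F : - rsum F = rsum (fun x : Om => -1 * F x) by rewrite rsumMl; ring.
by rewrite /inner -rsumMl /Rminus oppE -!rsumD; apply: eq_rsum => x; ring.
Qed.

Lemma mean_mxapply P f :
  stochastic P -> self_adjoint mu P -> mean mu (mxapply P f) = mean mu f.
Proof.
move=> [_ P1] Psa.
have meanE g : mean mu g = inner mu (fun _ => 1) g.
  by rewrite /mean /inner; apply: eq_rsum => x; ring.
have P_cst : mxapply P (fun _ => 1) = (fun _ => 1).
  apply: functional_extensionality => x; rewrite /mxapply -[RHS](P1 x).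
  by apply: eq_rsum => y; ring.
by rewrite !meanE Psa P_cst.
Qed.

(* The deficit <h,h> - <h,Ph> is the Dirichlet form
   1/2 sum_(x,y) mu(x) P(x,y) (h x - h y)^2. *)
Lemma inner_mxapply_le P h : stochastic P -> reversible mu P ->
  inner mu h (mxapply P h) <= inner mu h h.
Proof.
move=> [P_ge0 P1] Prev.
pose A x y := mu x * P x y * (h x * h x) / 2.
have quadE : inner mu h (mxapply P h)
    = rsum (fun x => rsum (fun y => h x * (P x y * h y) * mu x)).
  apply: eq_rsum => x; rewrite (Rmult_comm (h x)) -!rsumMr.
  by apply: eq_rsum => y; ring.
have halfE : rsum (fun x => rsum (fun y => A x y)) = inner mu h h / 2.
  rewrite /Rdiv -rsumMr; apply: eq_rsum => x.
  rewrite (eq_rsum (G := fun y => mu x * (h x * h x) / 2 * P x y)); last first.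
    by move=> y; rewrite /A; field.
  by rewrite rsumMl P1; field.
have normE : inner mu h h
    = rsum (fun x => rsum (fun y => A x y)) + rsum (fun x => rsum (fun y => A y x)).
  by rewrite (rsum_exchange (fun x y => A y x)) halfE; field.
rewrite quadE normE -rsumD; apply: ler_rsum => x; rewrite -rsumD; apply: ler_rsum => y.
rewrite /A -(Prev x y).
have w_ge0 : 0 <= mu x * P x y by apply: Rmult_le_pos; [apply: Rlt_le | apply: P_ge0].
have := Rmult_le_pos _ _ w_ge0 (Rle_0_sqr (h x - h y)); rewrite /Rsqr; nra.
Qed.

Section Projection.
Variable S : Om -> Om -> R.
Hypotheses (S_sa : self_adjoint mu S) (S_idem : mxmul S S = S).

Lemma mxapply_idem f : mxapply S (mxapply S f) = mxapply S f.
Proof. by rewrite -mxapply_mul S_idem. Qed.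

Lemma inner_projr f : inner mu f (mxapply S f) = inner mu (mxapply S f) (mxapply S f).
Proof. by rewrite -{1}mxapply_idem S_sa. Qed.

Lemma inner_proj_le f : inner mu (mxapply S f) (mxapply S f) <= inner mu f f.
Proof.
have := inner_ge0 (fun x => f x - mxapply S f x).
by rewrite inner_subrr inner_projr; lra.
Qed.

Lemma inner_sandwich P f :
  inner mu f (mxapply (mxmul (mxmul S P) S) f)
  = inner mu (mxapply S f) (mxapply P (mxapply S f)).
Proof. by rewrite !mxapply_mul S_sa. Qed.

End Projection.
End InnerProduct.

Lemma Rsup_lub E : bound E -> (exists x, E x) -> is_lub E (Rsup E).
Proof.
move=> Eb Ene; rewrite /Rsup.
case: excluded_middle_informative => [H | []]; last by split.
by case: completeness.
Qed.

Lemma Rsup_le (A B : R -> Prop) : (exists r, A r) -> bound B ->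
  (forall r, A r -> exists2 r', B r' & r <= r') -> Rsup A <= Rsup B.
Proof.
move=> [r0 Ar0] Bb AB.
have [ubB _] : is_lub B (Rsup B).
  by apply: Rsup_lub => //; case: (AB _ Ar0) => r' Br' _; exists r'.
have ubA : is_upper_bound A (Rsup B).
  by move=> r /AB [r' Br' le]; apply: Rle_trans le (ubB _ Br').
by have [_ lubA] := Rsup_lub (ex_intro _ _ ubA) (ex_intro _ _ Ar0); apply: lubA.
Qed.

Section SpectralGap.
Variables (Om : finType) (mu : Om -> R).

Definition admissible (f : Om -> R) := mean mu f = 0 /\ inner mu f f <= 1.

Definition rayleigh_values (P : Om -> Om -> R) (r : R) :=
  exists f, mean mu f = 0 /\ inner mu f f <= 1 /\ r = inner mu f (mxapply P f).

Lemma gapE P : gap mu P = 1 - Rsup (rayleigh_values P).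
Proof. by []. Qed.

Lemma rayleigh_values0 P : rayleigh_values P 0.
Proof.
exists (fun _ => 0); rewrite /mean /inner.
under eq_rsum => x do rewrite Rmult_0_l.
under [X in X <= 1]eq_rsum => x do rewrite !Rmult_0_l.
under [X in 0 = X]eq_rsum => x do rewrite !Rmult_0_l.
by rewrite rsum0; split; [|split; [lra|]].
Qed.

Lemma rayleigh_values_bound P :
  (forall f, inner mu f (mxapply P f) <= inner mu f f) -> bound (rayleigh_values P).
Proof. by move=> Ple; exists 1 => _ [f [_ [ff1 ->]]]; apply: Rle_trans (Ple f) ff1. Qed.

Lemma gap_le_dominated P Q : bound (rayleigh_values Q) ->
  (forall f, admissible f -> exists2 g, admissible g &
     inner mu f (mxapply P f) <= inner mu g (mxapply Q g)) ->
  gap mu Q <= gap mu P.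
Proof.
move=> Qb PQ; rewrite !gapE.
suff : Rsup (rayleigh_values P) <= Rsup (rayleigh_values Q) by lra.
apply: Rsup_le (ex_intro _ _ (rayleigh_values0 P)) Qb _ => _ [f [mean_f [ff1 ->]]].
have [g [mean_g gg1] le] := PQ f (conj mean_f ff1).
by exists (inner mu g (mxapply Q g)) => //; exists g.
Qed.

End SpectralGap.

Theorem mainTheorem13 (Omega : finType) (mu : Omega -> R)
  (S T : Omega -> Omega -> R)
  (Hmu : prob_full_support mu)
  (HSst : stochastic S) (HTst : stochastic T)
  (HSrev : reversible mu S) (HTrev : reversible mu T)
  (HSpsd : psd mu S) (HTpsd : psd mu T)
  (HSidem : mxmul S S = S)
  (a : R) (Ha : 0 <= a <= 1) :
  gap mu (mxmul (mxmul S T) S) >= gap mu (mxadd (mxscale a S) (mxscale (1 - a) T)).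
Proof.
have [mu_gt0 _] := Hmu; have [S_sa _] := HSpsd.
have S_le h := inner_mxapply_le mu_gt0 h HSst HSrev.
have T_le h := inner_mxapply_le mu_gt0 h HTst HTrev.
apply/Rle_ge/gap_le_dominated.
  apply: rayleigh_values_bound => f.
  by rewrite mxapply_comb inner_linr; have := S_le f; have := T_le f; nra.
move=> f [mean_f ff1]; set g := mxapply S f.
exists g; first split.
- by rewrite /g mean_mxapply.
- exact: Rle_trans (inner_proj_le mu_gt0 S_sa HSidem f) ff1.
rewrite inner_sandwich // mxapply_comb inner_linr -/g mxapply_idem // -/g.
by have := T_le g; nra.
Qed.
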